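(* Let $K$ be a finite field and let $d$ be an integer with $\gcd(d,|K|-1)=1$. For every $b\in K$ with $b\neq 1$, $$\sum_{a\in K^\times}W_{K,d}(a)\,W_{K,d}(ba)=0.$$
   Context: Let $p$ be the characteristic of $K$. $\psi_K(x)=\exp(2\pi i\,\mathrm{Tr}_{K/\mathbb{F}_p}(x)/p)$ and $W_{K,d}(a)=\sum_{x\in K}\psi_K(x^d+ax)$ for $a\in K$. *)

From HB Require Import structures.
From mathcomp Require Import all_boot all_order all_algebra all_field.
Set Implicit Arguments. Unset Strict Implicit. Unset Printing Implicit Defensive.
Import GRing.Theory Num.Theory.
Local Open Scope ring_scope.

(* characteristic p of the finite field K (|K| = p^n with p prime) *)
Definition fchar (K : finFieldType) : nat := pdiv #|K|.
Definition fdeg (K : finFieldType) : nat := logn (fchar K) #|K|.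

(* absolute trace Tr_{K/F_p}(x) = x + x^p + ... + x^(p^(n-1)), an element of
   the prime subfield of K *)
Definition ftrace (K : finFieldType) (x : K) : K :=
  \sum_(i < fdeg K) x ^+ (fchar K ^ i).

Definition prime_rep (K : finFieldType) (t : K) : nat :=
  if [pick k : 'I_(fchar K) | (k%:R : K) == t] is Some k then val k else 0%N.

(* exp(2 pi i / p) in the algebraic complex numbers: the p-th root of -1 with
   minimal nonnegative argument is exp(i pi / p); square it *)
Definition zeta (p : nat) : algC := (p.-root (-1)) ^+ 2.

Definition psiK (K : finFieldType) (x : K) : algC :=
  zeta (fchar K) ^+ prime_rep (ftrace x).

Definition WKd (K : finFieldType) (d : nat) (a : K) : algC :=
  \sum_(x : K) psiK (x ^+ d + a * x).

From HB Require Import structures.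
From mathcomp Require Import all_boot all_order all_algebra all_field.
From mathcomp Require Import ring.
Import GRing.Theory Num.Theory.
Local Open Scope ring_scope.
Set Implicit Arguments. Unset Strict Implicit. Unset Printing Implicit Defensive.

(* Summing W(a) W(ba) over all a and using orthogonality of a nontrivial
   additive character psi collapses the double sum over (x, y) to the line
   x = -by, leaving |K| * sum_y psi(((-b)^d + 1) y^d).  As x |-> x^d permutes K,
   this vanishes unless (-b)^d = -1 = (-1)^d, i.e. b = 1; the omitted term a = 0
   is (sum_x psi(x^d))^2 = 0.  The character psi_K is nontrivial because the
   trace, a polynomial of degree p^(n-1) < |K|, cannot vanish on all of K. *)


Lemma natr_eq_pchar (R : nzRingType) p m n :
  p \in [pchar R] -> (m%:R == n%:R :> R) = (m == n %[mod p]).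
Proof.
move=> pcharRp; wlog le_mn : m n / (m <= n)%N.
  by move=> IH; case: (leqP m n) => [|/ltnW] /IH //; rewrite eq_sym [RHS]eq_sym.
by rewrite [RHS]eq_sym eqn_mod_dvd // (dvdn_pcharf pcharRp) natrB // subr_eq0 eq_sym.
Qed.

Lemma pFrobenius_fixed_natr (R : idomainType) p (t : R) :
  p \in [pchar R] -> t ^+ p = t -> exists2 k, (k < p)%N & t = k%:R.
Proof.
move=> pcharRp tp; have p_gt1 := prime_gt1 (pcharf_prime pcharRp).
have [/mapP[k] | t_new] := boolP (t \in [seq k%:R | k <- iota 0 p]).
  by rewrite mem_iota => k_lt_p ->; exists k.
pose P : {poly R} := 'X^p - 'X.
have size_P : size P = p.+1.
  by rewrite size_polyDl size_polyXn // size_polyN size_polyX ltnS.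
have P_neq0 : P != 0 by rewrite -size_poly_eq0 size_P.
pose rs := t :: [seq k%:R | k <- iota 0 p].
have rs_uniq : uniq rs.
  rewrite /= t_new map_inj_in_uniq ?iota_uniq // => i j.
  rewrite !mem_iota /= => i_lt_p j_lt_p /eqP.
  by rewrite (natr_eq_pchar _ _ pcharRp) !modn_small // => /eqP.
have rs_roots : all (root P) rs.
  rewrite /= rootE !hornerE tp subrr eqxx /=.
  apply/allP => _ /mapP[k _ ->].
  by rewrite rootE !hornerE -(pFrobenius_autE pcharRp) rmorph_nat subrr.
by have := max_poly_roots P_neq0 rs_roots rs_uniq; rewrite size_P /= size_map size_iota ltnn.
Qed.

Lemma prime_prim_root (R : idomainType) p (z : R) :
  prime p -> z ^+ p = 1 -> z != 1 -> p.-primitive_root z.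
Proof.
move=> p_pr zp z_neq1; have [m m_prim m_dvd_p] := prim_order_exists (prime_gt0 p_pr) zp.
have /orP[/eqP m1 | /eqP <-] := (primeP p_pr).2 m m_dvd_p => //.
by move: z_neq1; rewrite -(prim_expr_order m_prim) m1 expr1 eqxx.
Qed.

Lemma zeta_prim_root p : prime p -> p.-primitive_root (zeta p).
Proof.
move=> p_pr; have p_gt1 := prime_gt1 p_pr.
have rootN1 : p.-root (-1 : algC) ^+ p = -1 by rewrite rootCK // ltnW.
apply: prime_prim_root => //; first by rewrite /zeta exprAC rootN1 sqrrN expr1n.
rewrite /zeta sqrf_eq1 negb_or; apply/andP; split; apply/eqP => root_eq.
  move: rootN1; rewrite root_eq expr1n => /eqP.
  by rewrite -subr_eq0 opprK -mulr2n pnatr_eq0.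
by have := rootC_lt0 (-1 : algC) p_gt1; rewrite root_eq ltrN10.
Qed.

Lemma expf_mul_card_pred (K : finFieldType) (x : K) k : x ^+ (k * #|K|.-1).+1 = x.
Proof.
elim: k => [|k IHk]; first by rewrite expr1.
by rewrite mulSn -addnS exprD IHk -exprSr prednK ?expf_card // ltnW // finNzRing_gt1.
Qed.

Lemma expf_coprime_inj (K : finFieldType) d :
  (0 < d)%N -> coprime d #|K|.-1 -> injective (fun x : K => x ^+ d).
Proof.
move=> d_gt0 d_coprime; have [e k de _] := egcdnP #|K|.-1 d_gt0.
apply: (can_inj (g := fun y => y ^+ e)) => x /=.
by rewrite -exprM mulnC de (eqnP d_coprime) addn1 expf_mul_card_pred.
Qed.

Lemma expN1_inj (R : nzRingType) d :
  injective (fun x : R => x ^+ d) -> (-1) ^+ d = -1 :> R.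
Proof.
move=> inj_d; rewrite -signr_odd; case d_odd: (odd d) => //=.
have -> : -1 = 1 :> R by apply: inj_d; rewrite /= expr1n -signr_odd d_odd.
by rewrite expr0.
Qed.

Lemma fchar_eq (K : finFieldType) p : p \in [pchar K] -> fchar K = p.
Proof.
move=> pcharKp; have p_pr := pcharf_prime pcharKp.
rewrite /fchar (card_pprimeChar pcharKp).
case def_n: (logn p _) => [|n]; last exact: pdiv_pfactor.
by have := finNzRing_gt1 K; rewrite (card_pprimeChar pcharKp) def_n.
Qed.

Lemma fchar_pchar (K : finFieldType) : fchar K \in [pchar K].
Proof. by have [p _ pcharKp] := finPcharP K; rewrite (fchar_eq pcharKp). Qed.

Lemma fchar_prime (K : finFieldType) : prime (fchar K).
Proof. exact: pcharf_prime (fchar_pchar K). Qed.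

Lemma card_fchar (K : finFieldType) : #|K| = (fchar K ^ fdeg K)%N.
Proof. exact: card_pprimeChar (fchar_pchar K). Qed.

Lemma fdeg_gt0 (K : finFieldType) : (0 < fdeg K)%N.
Proof. by have := finNzRing_gt1 K; rewrite card_fchar lt0n; case: (fdeg K). Qed.

Section Trace.

Variable K : finFieldType.
Local Notation p := (fchar K).
Local Notation n := (fdeg K).

Lemma ftraceD (x y : K) : ftrace (x + y) = ftrace x + ftrace y.
Proof.
rewrite -big_split; apply: eq_bigr => i _; apply: exprDn_pchar.
by rewrite pnatX (pnatE _ (fchar_prime K)) fchar_pchar.
Qed.

Lemma ftrace0 : ftrace (0 : K) = 0.
Proof.
rewrite /ftrace big1 // => i _.
by rewrite expr0n expn_eq0 (gtn_eqF (prime_gt0 (fchar_prime K))).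
Qed.

Lemma ftrace_frob (x : K) : ftrace x ^+ p = ftrace x.
Proof.
rewrite /ftrace -(pFrobenius_autE (fchar_pchar K)) rmorph_sum /=.
case def_n: n (fdeg_gt0 K) => [//|m] _.
rewrite big_ord_recr big_ord_recl /= [RHS]addrC; congr (_ + _).
  by apply: eq_bigr => i _; rewrite pFrobenius_autE -exprM expnSr.
by rewrite pFrobenius_autE -exprM -expnSr -def_n -card_fchar expf_card.
Qed.

Lemma ftrace_neq0 : exists x : K, ftrace x != 0.
Proof.
apply/existsP; apply: contraT; rewrite negb_exists => /forallP ftrace_eq0.
case def_n: n (fdeg_gt0 K) => [//|m] _.
pose T : {poly K} := \sum_(i < m.+1) 'X^(p ^ i).
have size_T : size T = (p ^ m).+1.
  rewrite /T big_ord_recr /= addrC size_polyDl size_polyXn //.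
  apply: leq_ltn_trans (size_sum _ _ _) _; rewrite ltnS.
  by apply/bigmax_leqP => i _; rewrite size_polyXn ltn_exp2l ?prime_gt1 ?fchar_prime.
have T_neq0 : T != 0 by rewrite -size_poly_eq0 size_T.
have T_roots : all (root T) (enum K).
  apply/allP => x _; rewrite rootE horner_sum.
  under eq_bigr do rewrite hornerXn.
  by rewrite -def_n; have := ftrace_eq0 x; rewrite negbK.
have := max_poly_roots T_neq0 T_roots (enum_uniq _).
by rewrite size_T -cardE card_fchar def_n ltnS leqNgt ltn_exp2l ?ltnSn ?prime_gt1 ?fchar_prime.
Qed.

End Trace.

Lemma prime_repK (K : finFieldType) (t : K) : t ^+ fchar K = t -> (prime_rep t)%:R = t.
Proof.
move=> t_frob; have [k k_lt_p ->] := pFrobenius_fixed_natr (fchar_pchar K) t_frob.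
rewrite /prime_rep; case: pickP => [k' /eqP // | no_rep].
by have := no_rep (Ordinal k_lt_p); rewrite eqxx.
Qed.

Section Psi.

Variable K : finFieldType.

Lemma eq_psiK_zeta (x : K) k : (psiK x == zeta (fchar K) ^+ k) = (ftrace x == k%:R).
Proof.
rewrite (eq_prim_root_expr (zeta_prim_root (fchar_prime K))).
by rewrite -(natr_eq_pchar _ _ (fchar_pchar K)) prime_repK // ftrace_frob.
Qed.

Lemma psiKD : {morph @psiK K : x y / x + y >-> x * y}.
Proof.
move=> x y; apply/eqP; rewrite /= {2 3}/psiK -exprD eq_psiK_zeta natrD.
by rewrite !prime_repK ?ftrace_frob ?ftraceD.
Qed.

Lemma psiK0 : psiK (0 : K) = 1.
Proof. by apply/eqP; rewrite -(expr0 (zeta (fchar K))) eq_psiK_zeta ftrace0. Qed.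

Lemma psiK_nontriv : exists x : K, psiK x != 1.
Proof.
have [x ftrace_x_neq0] := ftrace_neq0 K; exists x.
by rewrite -(expr0 (zeta (fchar K))) eq_psiK_zeta.
Qed.

End Psi.

Section AdditiveCharacter.

Variables (K : finFieldType) (R : idomainType) (psi : K -> R).
Hypotheses (psiD : {morph psi : x y / x + y >-> x * y}) (psi0 : psi 0 = 1).
Hypothesis psi_nontriv : exists x, psi x != 1.

Lemma sum_char : \sum_x psi x = 0.
Proof.
have [x0 psi_x0_neq1] := psi_nontriv.
have sum_shift : \sum_x psi x = (\sum_x psi x) * psi x0.
  by rewrite {1}(reindex_inj (addIr x0)) mulr_suml; apply: eq_bigr => x _; rewrite psiD.
apply/eqP; move: sum_shift => /eqP; rewrite -subr_eq0 -{1}[\sum_x psi x]mulr1 -mulrBr.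
by rewrite mulf_eq0 subr_eq0 [1 == _]eq_sym (negbTE psi_x0_neq1) orbF.
Qed.

Lemma sum_char_mul (c : K) : \sum_x psi (c * x) = if c == 0 then #|K|%:R else 0.
Proof.
have [-> | c_neq0] := eqVneq c 0.
  by under eq_bigr do rewrite mul0r psi0; rewrite sumr_const.
by have := sum_char; rewrite (reindex_inj (mulfI c_neq0)).
Qed.

Lemma sum_char_expr (c : K) d : (0 < d)%N -> coprime d #|K|.-1 ->
  \sum_x psi (c * x ^+ d) = if c == 0 then #|K|%:R else 0.
Proof.
move=> d_gt0 d_coprime.
by have := sum_char_mul c; rewrite (reindex_inj (expf_coprime_inj d_gt0 d_coprime)).
Qed.

Definition weil_sum d (a : K) : R := \sum_x psi (x ^+ d + a * x).

Lemma sum_weil_sum_mul d (b : K) :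
  \sum_a weil_sum d a * weil_sum d (b * a) =
  #|K|%:R * \sum_y psi (((- b) ^+ d + 1) * y ^+ d).
Proof.
have expand a : weil_sum d a * weil_sum d (b * a) =
    \sum_x \sum_y psi (x ^+ d + y ^+ d) * psi ((x + b * y) * a).
  rewrite /weil_sum mulr_suml; apply: eq_bigr => x _.
  rewrite mulr_sumr; apply: eq_bigr => y _; rewrite -!psiD; congr psi; ring.
under eq_bigr do rewrite expand.
rewrite exchange_big /=; under eq_bigr do rewrite exchange_big /=.
under eq_bigr do under eq_bigr do rewrite -mulr_sumr sum_char_mul.
rewrite exchange_big mulr_sumr; apply: eq_bigr => y _.
rewrite (bigD1 (- (b * y))) //= addNr eqxx big1 => [|x x_neq].
  by rewrite addr0 mulrC -mulNr exprMn mulrDl mul1r.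
by rewrite addr_eq0 (negbTE x_neq) mulr0.
Qed.

Lemma sum_weil_sum_mul_neq0 d (b : K) : coprime d #|K|.-1 -> b != 1 ->
  \sum_(a | a != 0) weil_sum d a * weil_sum d (b * a) = 0.
Proof.
move=> d_coprime b_neq1; have := sum_weil_sum_mul d b.
rewrite (bigD1 0) //= mulr0 => /(canRL (addKr _)) ->; apply/eqP.
rewrite addrC subr_eq0; apply/eqP.
have [-> | d_gt0] := posnP d.
  (* both sides are |K|^2 psi(2) *)
  rewrite /weil_sum; under eq_bigr do rewrite !expr0 mulr1.
  under [in RHS]eq_bigr do rewrite expr0 mul0r addr0.
  by rewrite !sumr_const psiD !mulr_natl mulrnAl mulrnAr.
have inj_d := expf_coprime_inj d_gt0 d_coprime.
have scale_neq0 : (- b) ^+ d + 1 != 0.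
  apply: contra b_neq1; rewrite addr_eq0 -(expN1_inj inj_d).
  by move=> /eqP/inj_d/oppr_inj ->.
have weil_sum0 : weil_sum d 0 = 0.
  rewrite /weil_sum; under eq_bigr do rewrite mul0r addr0 -[_ ^+ d]mul1r.
  by rewrite sum_char_expr // oner_eq0.
by rewrite sum_char_expr // (negbTE scale_neq0) mulr0 weil_sum0 mulr0.
Qed.

End AdditiveCharacter.

Theorem lemma5p6 (K : finFieldType) (d : nat) :
  coprime d #|K|.-1 ->
  forall b : K, b != 1 ->
  \sum_(a : K | a != 0) WKd d a * WKd d (b * a) = 0.
Proof.
move=> d_coprime b b_neq1.
exact: (sum_weil_sum_mul_neq0 (@psiKD K) (@psiK0 K) (@psiK_nontriv K)).
Qed.
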